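(* Let $G$ be a proper interval graph on vertex set $[n]$, $t\ge2$, and $I=I_t(G)\subset K[x_1,\dots,x_n]$. Then for every positive integer $m$, $I^m$ has linear quotients.
   Context: $I_t(G)$ is the ideal generated by all squarefree monomials $x_{i_1}\cdots x_{i_t}$ with $\{i_1,\dots,i_t\}$ an independent set of $G$. A monomial ideal $J$ has linear quotients if its minimal monomial generators can be ordered $w_1,\dots,w_r$ so that for each $i\ge2$ the colon ideal $\langle w_1,\dots,w_{i-1}\rangle : w_i$ is generated by variables. A proper interval graph is a graph whose vertices can be assigned real intervals, none properly containing another, such that two vertices are adjacent iff their intervals intersect. *)

From Stdlib Require Import Reals.
From mathcomp Require Import all_boot.
Set Implicit Arguments. Unset Strict Implicit. Unset Printing Implicit Defensive.

(* Monomials x^u in K[x_1..x_n] are exponent vectors u : 'I_n -> nat. *)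
Definition mon (n : nat) := {ffun 'I_n -> nat}.

Definition mon_one (n : nat) : mon n := [ffun _ => 0%N].
Definition mon_mul (n : nat) (u v : mon n) : mon n := [ffun i => (u i + v i)%N].
Definition mon_dvd (n : nat) (u v : mon n) : bool := [forall i, u i <= v i].

Definition sqfree_mon (n : nat) (A : {set 'I_n}) : mon n :=
  [ffun i => nat_of_bool (i \in A)].

Definition independent (n : nat) (e : rel 'I_n) (A : {set 'I_n}) : bool :=
  [forall x in A, forall y in A, ~~ e x y].

Definition proper_interval_graph (n : nat) (e : rel 'I_n) : Prop :=
  (forall i, ~~ e i i) /\
  exists a b : 'I_n -> R,
    (forall i, Rle (a i) (b i)) /\
    (forall i j, ~ (Rle (a i) (a j) /\ Rle (b j) (b i) /\ (a i <> a j \/ b i <> b j))) /\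
    (forall i j, i <> j -> (e i j <-> (Rle (a i) (b j) /\ Rle (a j) (b i)))).

Definition It_gens (n : nat) (e : rel 'I_n) (t : nat) : seq (mon n) :=
  [seq sqfree_mon A | A <- enum [set A : {set 'I_n} | (#|A| == t) && independent e A]].

Fixpoint pow_gens (n : nat) (gs : seq (mon n)) (m : nat) : seq (mon n) :=
  match m with
  | 0 => [:: mon_one n]
  | m'.+1 => [seq mon_mul g h | g <- gs, h <- pow_gens gs m']
  end.

Definition min_gens (n : nat) (gs : seq (mon n)) : seq (mon n) :=
  undup [seq g <- gs | ~~ has (fun h => mon_dvd h g && (h != g)) gs].

Definition in_mon_ideal (n : nat) (gs : seq (mon n)) (u : mon n) : Prop :=
  exists2 g, g \in gs & mon_dvd g u.

(* The monomial ideal J is generated by variables {x_k : k in S}, tested on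
   monomials (a monomial ideal is determined by the monomials it contains). *)
Definition generated_by_vars (n : nat) (J : mon n -> Prop) : Prop :=
  exists S : {set 'I_n}, forall u : mon n, J u <-> exists2 k, k \in S & (0 < u k)%N.

Definition colon (n : nat) (gs : seq (mon n)) (w : mon n) : mon n -> Prop :=
  fun u => in_mon_ideal gs (mon_mul u w).

Definition linear_quotients (n : nat) (gs : seq (mon n)) : Prop :=
  exists w : seq (mon n),
    perm_eq w (min_gens gs) /\
    forall i, (0 < i < size w)%N ->
      generated_by_vars (colon (take i w) (nth (mon_one n) w i)).

(* Order the vertices by left endpoint.  Then every vertex adjacent to a later
   one is adjacent to all vertices in between, so the cliques that matter are
   runs [x, y] of consecutive vertices.  A monomial of degree t m is a product
   of m generators of I_t(G) iff its exponents sum to at most m on every clique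
   run: an independent set meets a clique at most once, and conversely the
   vertices carrying the units numbered 0, m+1, 2(m+1), ... of the monomial form
   an independent t-set that splits off one factor.  Order these generators by
   decreasing lex order along the vertex order.  If v comes before u, k is the
   first position where they differ and l the first position after k where u
   is nonzero, then u x_k / x_l is again a generator coming before u; hence
   every colon ideal is generated by variables. *)

From Stdlib Require Import Reals Lra.
From mathcomp Require Import all_boot zify.
Set Implicit Arguments. Unset Strict Implicit. Unset Printing Implicit Defensive.

Definition var (n : nat) (z : 'I_n) : mon n := [ffun y => nat_of_bool (y == z)].

Definition mdeg (n : nat) (u : mon n) : nat := \sum_z u z.

Lemma mdeg_mul n (u v : mon n) : mdeg (mon_mul u v) = mdeg u + mdeg v.
Proof. by rewrite /mdeg -big_split; apply: eq_bigr => z _; rewrite ffunE. Qed.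

Lemma mdeg_sqfree n (A : {set 'I_n}) : mdeg (sqfree_mon A) = #|A|.
Proof.
rewrite /mdeg -sum1_card [RHS]big_mkcond; apply: eq_bigr => z _.
by rewrite ffunE; case: (z \in A).
Qed.

Lemma mon_dvd_mdeg_eq n (u v : mon n) : mon_dvd u v -> mdeg u = mdeg v -> u = v.
Proof.
move=> /forallP uv duv; apply/ffunP => z; apply/eqP; rewrite eqn_leq uv /=.
have : \sum_y (v y - u y) == 0 by rewrite sumnB // -/(mdeg v) -/(mdeg u) duv subnn.
by rewrite sum_nat_eq0 => /forallP/(_ z); rewrite subn_eq0.
Qed.

Lemma mem_min_gens_equideg n (gs : seq (mon n)) d :
  {in gs, forall g, mdeg g = d} -> min_gens gs =i gs.
Proof.
move=> equideg g; rewrite mem_undup mem_filter andb_idl // => ggs.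
apply/hasP => -[h hgs /andP[hg /eqP]]; apply.
by apply: mon_dvd_mdeg_eq; rewrite // !equideg.
Qed.

Lemma colon_generated_by_vars n (gs : seq (mon n)) (u : mon n) :
  (forall g, g \in gs ->
     exists2 z, u z < g z & has (fun h => mon_dvd h (mon_mul (var z) u)) gs) ->
  generated_by_vars (colon gs u).
Proof.
move=> exchange.
exists [set z | has (fun h => mon_dvd h (mon_mul (var z) u)) gs] => f; split.
- case=> g ggs /forallP gfu; have [z uz zS] := exchange g ggs.
  exists z; first by rewrite inE.
  by have := leq_trans uz (gfu z); rewrite ffunE; case: (f z) => //; rewrite add0n ltnn.
- case=> z; rewrite inE => /hasP[h hgs /forallP hzu] fz; exists h => //.
  apply/forallP => y; have := hzu y; rewrite !ffunE.
  by case: (y =P z) => [->|_] /=; lia.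
Qed.

Section SortedTake.
Variables (T : eqType) (r : rel T) (x0 : T) (s : seq T).
Hypotheses (r_trans : transitive r) (r_refl : reflexive r) (s_sorted : sorted r s).

Lemma sorted_take_nth i g : g \in take i s -> i < size s -> r g (nth x0 s i).
Proof.
move=> gs i_lt; have ji : index g (take i s) < i.
  by move: gs; rewrite -index_mem size_takel // ltnW.
rewrite -(nth_index x0 gs) nth_take //.
by apply: (sorted_leq_nth r_trans r_refl) => //; rewrite ?inE; lia.
Qed.

Lemma mem_take_sorted i w : w \in s -> ~~ r (nth x0 s i) w -> w \in take i s.
Proof.
move=> ws nrw; have [ji|ij] := ltnP (index w s) i.
  rewrite -(nth_index x0 ws) -(nth_take x0 ji) mem_nth //.
  by rewrite size_take_min leq_min ji index_mem.
have js : index w s < size s by rewrite index_mem.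
case/negP: nrw; rewrite -(nth_index x0 ws).
by apply: (sorted_leq_nth r_trans r_refl) => //; rewrite ?inE; lia.
Qed.

End SortedTake.

Lemma nth_notin_take (T : eqType) (x0 : T) (s : seq T) i :
  uniq s -> i < size s -> nth x0 s i \notin take i s.
Proof.
move=> s_uniq i_lt; apply/negP => mem.
have ji : index (nth x0 s i) (take i s) < i.
  by move: mem; rewrite -index_mem size_takel // ltnW.
have := nth_index x0 mem; rewrite nth_take // => /eqP.
by rewrite nth_uniq ?(ltn_trans ji) // => /eqP; lia.
Qed.

Definition lex_lt (n : nat) (f g : nat -> nat) : bool :=
  [exists k : 'I_n, [forall i : 'I_k, f i == g i] && (f k < g k)].

Lemma lex_ltP n f g :
  reflect (exists2 k, k < n & (forall i, i < k -> f i = g i) /\ f k < g k)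
          (lex_lt n f g).
Proof.
apply: (iffP existsP) => [[k /andP[/forallP eqk fgk]]|[k kn [eqk fgk]]].
  by exists k => //; split => // i ik; apply/eqP: (eqk (Ordinal ik)).
by exists (Ordinal kn); rewrite fgk andbT; apply/forallP => i; rewrite eqk.
Qed.

Lemma lex_lt_irr n f : lex_lt n f f = false.
Proof. by apply/lex_ltP => -[k _ []]; rewrite ltnn. Qed.

Lemma lex_lt_trans n : transitive (lex_lt n).
Proof.
move=> g f h /lex_ltP[k kn [eqk ltk]] /lex_ltP[k' kn' [eqk' ltk']].
apply/lex_ltP; case: (ltngtP k k') => kk.
- exists k => //; split; last by rewrite -(eqk' k kk).
  by move=> i ik; rewrite eqk ?eqk' //; lia.
- exists k' => //; split; last by rewrite (eqk k' kk).
  by move=> i ik; rewrite eqk ?eqk' //; lia.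
- exists k => //; split; last by rewrite (leq_trans ltk) // kk ltnW.
  by move=> i ik; rewrite eqk ?eqk' //; lia.
Qed.

Lemma lex_lt_total n f g :
  (exists2 i, i < n & f i != g i) -> lex_lt n f g || lex_lt n g f.
Proof.
move=> neq; have exk : exists i, (i < n) && (f i != g i).
  by case: neq => i ??; exists i; apply/andP.
case: (ex_minnP exk) => k /andP[kn /eqP neqk] kmin.
have eqk i : i < k -> f i = g i.
  move=> ik; apply/eqP; case: eqP => // /eqP neqi.
  by have := kmin i; rewrite neqi andbT (ltn_trans ik kn) => /(_ isT); lia.
case: (ltngtP (f k) (g k)) => // fgk; apply/orP.
  by left; apply/lex_ltP; exists k.
by right; apply/lex_ltP; exists k => //; split => // i ik; rewrite eqk.
Qed.

Definition psum (f : nat -> nat) (k : nat) : nat := \sum_(0 <= i < k) f i.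
Definition run_sum (f : nat -> nat) (x y : nat) : nat := \sum_(x <= i < y.+1) f i.

Lemma psum_recr f k : psum f k.+1 = psum f k + f k.
Proof. exact: big_nat_recr. Qed.

Lemma psum_cat f x y : x <= y -> psum f y = psum f x + \sum_(x <= i < y) f i.
Proof. by move=> xy; rewrite /psum -big_cat_nat. Qed.

Lemma psum_run f x y : x <= y.+1 -> psum f y.+1 = psum f x + run_sum f x y.
Proof. exact: psum_cat. Qed.

Lemma psum_mono f : {homo psum f : x y / x <= y}.
Proof. by move=> x y xy; rewrite (psum_cat f xy) leq_addr. Qed.

Lemma psumD f g k : psum (fun i => f i + g i) k = psum f k + psum g k.
Proof. exact: big_split. Qed.

Lemma run_sum_split f x c y :
  x <= c <= y -> run_sum f x y = run_sum f x c + run_sum f c.+1 y.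
Proof. by case/andP=> xc cy; rewrite /run_sum -big_cat_nat //; lia. Qed.

Lemma run_sum_recr f x y : x <= y -> run_sum f x y = \sum_(x <= i < y) f i + f y.
Proof. exact: big_nat_recr. Qed.

Lemma leq_run_sum f x c y : x <= c <= y -> f c <= run_sum f x y.
Proof.
by move=> xcy; rewrite (run_sum_split f xcy) run_sum_recr ?addnA ?leq_addl; lia.
Qed.

Lemma run_sumD f g x y :
  run_sum (fun i => f i + g i) x y = run_sum f x y + run_sum g x y.
Proof. exact: big_split. Qed.

Lemma run_sum_indicator c x y :
  run_sum (fun i => nat_of_bool (i == c)) x y = (x <= c <= y).
Proof.
rewrite /run_sum -big_mkcond sum1_count /= -(eq_count (a1 := pred1 c)) //.
by rewrite count_uniq_mem ?iota_uniq // mem_index_iota ltnS.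
Qed.

Lemma psum_indicator c k : psum (fun i => nat_of_bool (i == c)) k = (c < k).
Proof.
rewrite /psum -big_mkcond sum1_count /= -(eq_count (a1 := pred1 c)) //.
by rewrite count_uniq_mem ?iota_uniq // mem_index_iota.
Qed.

Lemma run_sum_le1 (f : nat -> nat) x y : (forall i, f i <= 1) ->
  (forall i j, x <= i -> i < j -> j <= y -> 0 < f i -> 0 < f j -> False) ->
  run_sum f x y <= 1.
Proof.
move=> f_le1 no_pair; rewrite /run_sum.
have {no_pair} : forall i j, x <= i -> i < j -> j < y.+1 -> 0 < f i -> 0 < f j -> False.
  by move=> i j xi ij; rewrite ltnS; apply: no_pair.
move: y.+1 => k; elim: k => [|k IH] no_pair.
  by rewrite big_geq.
have [xk|] := leqP x k; last by move=> kx; rewrite big_geq.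
rewrite big_nat_recr //=; have [fk0|fk_pos] := posnP (f k).
  by rewrite fk0 addn0; apply: IH => i j *; apply: (no_pair i j) => //; lia.
rewrite big1_seq ?add0n ?f_le1 // => i; rewrite mem_index_iota => /andP[_ /andP[xi ik]].
by apply/eqP; rewrite -leqn0 leqNgt; apply/negP => fi; apply: (no_pair i k).
Qed.

Lemma It_gensP n (e : rel 'I_n) t g :
  g \in It_gens e t -> exists2 A, g = sqfree_mon A & #|A| = t /\ independent e A.
Proof. by case/mapP=> A; rewrite mem_enum inE => /andP[/eqP cA indA] ->; exists A. Qed.

Lemma sqfree_It_gens n (e : rel 'I_n) t (A : {set 'I_n}) :
  #|A| = t -> independent e A -> sqfree_mon A \in It_gens e t.
Proof. by move=> cA indA; apply: map_f; rewrite mem_enum inE cA eqxx. Qed.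

Section IntervalOrder.

Variables (n : nat) (e : rel 'I_n) (pi : 'I_n -> 'I_n).
Hypothesis pi_inj : injective pi.
Hypothesis e_irr : irreflexive e.
Hypothesis e_sym : symmetric e.
Hypothesis e_umbrella : forall i j k : 'I_n,
  i < j < k -> e (pi i) (pi k) -> e (pi i) (pi j) && e (pi j) (pi k).

(* Position i < n carries the vertex pi i; positions beyond n are empty. *)
Definition expo (u : mon n) (i : nat) : nat :=
  if insub i is Some a then u (pi a) else 0.

Definition adj (i j : nat) : bool :=
  if insub i is Some a then
    if insub j is Some b then e (pi a) (pi b) else false
  else false.

Lemma expo_ord u (a : 'I_n) : expo u a = u (pi a).
Proof. by rewrite /expo valK. Qed.

Lemma expo_ge u i : n <= i -> expo u i = 0.
Proof. by move=> ni; rewrite /expo insubF // ltnNge ni. Qed.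

Lemma expo_mul u v i : expo (mon_mul u v) i = expo u i + expo v i.
Proof. by rewrite /expo; case: insub => // a; rewrite ffunE. Qed.

Lemma expo_one i : expo (mon_one n) i = 0.
Proof. by rewrite /expo; case: insub => // a; rewrite ffunE. Qed.

Lemma expo_inj u v : expo u =1 expo v -> u = v.
Proof. by move=> uv; apply/ffunP => z; rewrite -(f_invF pi_inj z) -!expo_ord uv. Qed.

Lemma psum_expo u k : n <= k -> psum (expo u) k = mdeg u.
Proof.
move=> nk; rewrite (psum_cat _ nk) big1_seq ?addn0; last first.
  by move=> i; rewrite mem_index_iota => /andP[_ /andP[ni _]]; rewrite expo_ge.
rewrite /psum big_mkord /mdeg [RHS](reindex_inj pi_inj).
by apply: eq_bigr => a _; rewrite expo_ord.
Qed.

Lemma adj_ord (a b : 'I_n) : adj a b = e (pi a) (pi b).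
Proof. by rewrite /adj !valK. Qed.

Lemma adj_sym : symmetric adj.
Proof.
by move=> i j; rewrite /adj; case: insub => [a|]; case: insub => [b|] //; apply: e_sym.
Qed.

Lemma adj_umbrella i j k : i < j < k -> adj i k -> adj i j && adj j k.
Proof.
rewrite /adj => ijk; case: insubP => // a _ ai; case: insubP => // c _ ck ac; subst i k.
have jn : j < n by case/andP: ijk => _ /ltn_trans; apply; exact: ltn_ord.
by rewrite (insubT (fun k => k < n) jn); apply: (e_umbrella (j := Ordinal jn)).
Qed.

Definition clique_run (x y : nat) : bool := [&& x <= y, y < n & (x == y) || adj x y].

Lemma clique_run_adj x y i j :
  clique_run x y -> x <= i -> i < j -> j <= y -> adj i j.
Proof.
case/and3P=> xy yn /orP[/eqP<-|xy_adj] xi ij jy; first lia.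
have iy : adj i y.
  case: (ltngtP x i) xi => // [xi' _|<- //].
  by case/andP: (@adj_umbrella x i y ltac:(lia) xy_adj).
case: (ltngtP j y) jy => // [jy' _|-> //].
by case/andP: (@adj_umbrella i j y ltac:(lia) iy).
Qed.

Variable t : nat.

Definition admissible (m : nat) (u : mon n) : Prop :=
  mdeg u = t * m /\ forall x y, clique_run x y -> run_sum (expo u) x y <= m.

Lemma run_sum_sqfree A x y :
  independent e A -> clique_run x y -> run_sum (expo (sqfree_mon A)) x y <= 1.
Proof.
move=> /forall_inP indA xy; apply: run_sum_le1 => [i|i j xi ij jy].
  by rewrite /expo; case: insub => // a; rewrite ffunE; case: (_ \in _).
rewrite /expo; case: insubP => // a _ ai; case: insubP => // b _ bj; subst i j.
rewrite !ffunE.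
case Aa: (pi a \in A) => //; case Ab: (pi b \in A) => // _ _.
have := clique_run_adj xy xi ij jy; rewrite adj_ord.
by have /forall_inP/(_ _ Ab)/negbTE-> := indA _ Aa.
Qed.

Lemma pow_gens_admissible m u : u \in pow_gens (It_gens e t) m -> admissible m u.
Proof.
elim: m u => [|m IH] u /=.
  rewrite mem_seq1 => /eqP->; split.
    by rewrite muln0 /mdeg big1 // => z _; rewrite ffunE.
  by move=> x y _; rewrite /run_sum big1 // => i _; rewrite expo_one.
case/allpairsP=> -[g h] [/= /It_gensP[A -> [cA indA]] /IH[dh runh] ->].
split; first by rewrite mdeg_mul mdeg_sqfree dh cA mulnS.
move=> x y xy; rewrite /run_sum (eq_bigr _ (fun i _ => expo_mul _ _ i)) -/(run_sum _ _ _).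
by rewrite run_sumD; have := run_sum_sqfree indA xy; have := runh x y xy; lia.
Qed.

Section Greedy.

Variables (m : nat) (u : mon n).
Hypothesis u_adm : admissible m.+1 u.

Local Notation P := (psum (expo u)).

Lemma cut_exists s : exists y, (s * m.+1 < P y.+1) || (n <= y).
Proof. by exists n; rewrite leqnn orbT. Qed.

(* The s-th cut is the position of the unit number s * (m + 1) of u, counted
   from 0 along the interval order; the disjunct n <= y only makes it total. *)
Definition cut (s : nat) : nat := ex_minn (cut_exists s).

Lemma cut_min s y : s * m.+1 < P y.+1 -> cut s <= y.
Proof. by rewrite /cut; case: ex_minnP => c _ cmin ys; apply: cmin; rewrite ys. Qed.

Lemma cut_below s : P (cut s) <= s * m.+1.
Proof.
rewrite /cut; case: ex_minnP => -[|c] _ cmin; first by rewrite /psum big_geq.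
by rewrite leqNgt; apply/negP => lt; have := cmin c; rewrite lt => /(_ isT); lia.
Qed.

Lemma cut_lt s : s < t -> cut s < n.
Proof.
move=> st; have Pn : P n = t * m.+1 by rewrite psum_expo // u_adm.1.
have n_pos : 0 < n by case: (posnP n) Pn => [->|//]; rewrite /psum big_geq //; lia.
by have := @cut_min s n.-1; rewrite prednK // Pn ltn_pmul2r // st; lia.
Qed.

Lemma cut_above s : s < t -> s * m.+1 < P (cut s).+1.
Proof.
by move=> st; have := cut_lt st; rewrite /cut; case: ex_minnP => c /orP[//|nc] _; lia.
Qed.

Lemma expo_cut_pos s : s < t -> 0 < expo u (cut s).
Proof.
by move=> st; have := cut_above st; rewrite psum_recr; have := cut_below s; lia.
Qed.

Lemma cut_apart s s' : s < s' -> s' < t -> cut s < cut s' /\ ~~ adj (cut s) (cut s').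
Proof.
move=> ss' s't.
have step : s.+1 * m.+1 <= s' * m.+1 by rewrite leq_mul2r ss' orbT.
have le : cut s <= cut s'.
  by apply: cut_min; apply: leq_ltn_trans (cut_above s't); rewrite leq_mul2r ltnW ?orbT.
have heavy : m.+1 < run_sum (expo u) (cut s) (cut s').
  have := psum_run (expo u) (leqW le); have := cut_above s't; have := cut_below s.
  by move: step; rewrite mulSn; lia.
have : ~~ clique_run (cut s) (cut s') by apply/negP => /(u_adm.2 _ _); lia.
rewrite /clique_run le cut_lt //= negb_or => /andP[neq ->].
by rewrite ltn_neqAle neq le.
Qed.

Lemma cut_in_saturated_run x y :
  clique_run x y -> run_sum (expo u) x y = m.+1 -> exists2 s, s < t & x <= cut s <= y.
Proof.
case/and3P=> xy yn _ sat.
have Py : P y.+1 = P x + m.+1 by rewrite (psum_run _ (leqW xy)) sat.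
have Pt : P y.+1 <= t * m.+1 by rewrite -u_adm.1 -(psum_expo u (leqnn n)) psum_mono.
pose c := (P x + m) %/ m.+1.
have [lo hi] : P x <= c * m.+1 /\ c * m.+1 < P x + m.+1.
  by have := divn_eq (P x + m) m.+1; have := ltn_pmod (P x + m) (ltn0Sn m); lia.
have ct : c < t by rewrite -(ltn_pmul2r (ltn0Sn m)); lia.
exists c => //; apply/andP; split; last by apply: cut_min; lia.
rewrite leqNgt; apply/negP => cx.
by have := cut_above ct; have := psum_mono (expo u) cx; lia.
Qed.

Definition cut_vertex (s : 'I_t) : 'I_n := pi (Ordinal (cut_lt (ltn_ord s))).

Definition cut_set : {set 'I_n} := cut_vertex @: [set: 'I_t].

Lemma expo_cut_set i : expo (sqfree_mon cut_set) i = [exists s : 'I_t, cut s == i].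
Proof.
rewrite /expo; case: insubP => [a _ ai|ni]; last first.
  by case: existsP => // -[s /eqP cs]; case/negP: ni; rewrite -cs cut_lt.
rewrite ffunE; congr nat_of_bool.
apply/imsetP/existsP => [[s _ /pi_inj/(congr1 val) /= as_]|[s /eqP cs]].
  by exists s; rewrite -ai; apply/eqP; rewrite -as_.
by exists s => //; congr pi; apply: val_inj; rewrite /= cs ai.
Qed.

Lemma card_cut_set : #|cut_set| = t.
Proof.
rewrite card_imset ?cardsT ?card_ord // => s s' /pi_inj/(congr1 val) /= eq_cut.
apply: val_inj; case: (ltngtP s s') => // lt.
  by have [] := cut_apart lt (ltn_ord s'); lia.
by have [] := cut_apart lt (ltn_ord s); lia.
Qed.

Lemma independent_cut_set : independent e cut_set.
Proof.
apply/forall_inP => _ /imsetP[s _ ->]; apply/forall_inP => _ /imsetP[s' _ ->].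
rewrite /cut_vertex; case: (ltngtP s s') => ss'.
- by rewrite -adj_ord; exact: (cut_apart ss' (ltn_ord s')).2.
- by rewrite -adj_ord adj_sym; exact: (cut_apart ss' (ltn_ord s)).2.
- by have -> : s = s' := val_inj ss'; rewrite e_irr.
Qed.

Definition greedy_rest : mon n := [ffun z => u z - (z \in cut_set)].

Lemma greedy_factor : u = mon_mul (sqfree_mon cut_set) greedy_rest.
Proof.
apply: expo_inj => i; rewrite expo_mul.
have : expo (sqfree_mon cut_set) i <= expo u i.
  by rewrite expo_cut_set; case: existsP => // -[s /eqP <-]; apply: expo_cut_pos.
by rewrite /expo; case: insub => // a; rewrite !ffunE => le; rewrite subnKC.
Qed.

Lemma greedy_rest_admissible : admissible m greedy_rest.
Proof.
have [du run_u] := u_adm; split.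
  have := congr1 (@mdeg n) greedy_factor.
  by rewrite mdeg_mul mdeg_sqfree card_cut_set du mulnS; lia.
move=> x y xy.
have split_u : run_sum (expo u) x y =
    run_sum (expo (sqfree_mon cut_set)) x y + run_sum (expo greedy_rest) x y.
  by rewrite -run_sumD /run_sum {1}greedy_factor; apply: eq_bigr => i _; rewrite expo_mul.
have := run_u x y xy; case: (ltnP (run_sum (expo u) x y) m.+1) => [lt _|ge le]; first lia.
have [s st xsy] := @cut_in_saturated_run x y xy ltac:(lia).
have := leq_run_sum (expo (sqfree_mon cut_set)) xsy.
by rewrite expo_cut_set; case: existsP => [_|[]]; [lia | exists (Ordinal st)].
Qed.

Lemma greedy_split : exists A u', [/\ u = mon_mul (sqfree_mon A) u', #|A| = t,
  independent e A & admissible m u'].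
Proof.
exists cut_set, greedy_rest; split.
- exact: greedy_factor.
- exact: card_cut_set.
- exact: independent_cut_set.
- exact: greedy_rest_admissible.
Qed.

End Greedy.

Lemma admissible_pow_gens m u : admissible m u -> u \in pow_gens (It_gens e t) m.
Proof.
elim: m u => [|m IH] u u_adm /=.
  rewrite mem_seq1; apply/eqP/ffunP => z; rewrite ffunE; apply/eqP.
  have /eqP := u_adm.1; rewrite muln0 sum_nat_eq0.
  by move=> /forallP/(_ z)/implyP/(_ isT).
have [A [u' [-> cA indA adm']]] := greedy_split u_adm.
by apply: allpairs_f; [exact: sqfree_It_gens | exact: IH].
Qed.

Section Exchange.

Variables (m : nat) (u v : mon n) (k : nat).
Hypotheses (u_adm : admissible m u) (v_adm : admissible m v).
Hypotheses (k_lt : k < n) (eq_below : forall i, i < k -> expo u i = expo v i).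
Hypothesis lt_at : expo u k < expo v k.

Lemma exists_next_pos : exists l, (k < l) && (0 < expo u l).
Proof.
case: (boolP [exists l : 'I_n, (k < l) && (0 < expo u l)]) => [/existsP[l ?]|].
  by exists l.
move=> /existsPn none; exfalso.
have tail0 : \sum_(k.+1 <= i < n) expo u i = 0.
  apply: big1_seq => i; rewrite mem_index_iota => /andP[_ /andP[ki i_n]].
  by have := none (Ordinal i_n); rewrite /= ki /= lt0n negbK => /eqP.
have below : psum (expo u) k = psum (expo v) k.
  by apply: eq_big_nat => i /andP[_]; apply: eq_below.
have hu : mdeg u = psum (expo v) k + expo u k.
  by rewrite -(psum_expo u (leqnn n)) (psum_cat _ k_lt) tail0 addn0 psum_recr below.
have hv : psum (expo v) k + expo v k <= mdeg v.
  by rewrite -psum_recr -(psum_expo v (leqnn n)) psum_mono.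
by move: hu hv; rewrite u_adm.1 v_adm.1; lia.
Qed.

Definition next_pos : nat := ex_minn exists_next_pos.

Lemma next_posP : [/\ k < next_pos, 0 < expo u next_pos
  & forall i, k < i < next_pos -> expo u i = 0].
Proof.
rewrite /next_pos; case: ex_minnP => l /andP[kl ul] lmin; split => // i /andP[ki il].
by apply/eqP; rewrite -leqn0 leqNgt; apply/negP => ui; have := lmin i; rewrite ki ui; lia.
Qed.

Lemma next_pos_lt : next_pos < n.
Proof.
case: next_posP => _ ul _; rewrite ltnNge; apply/negP => /(expo_ge u) ul0.
by rewrite ul0 in ul.
Qed.

(* u x_k / x_l for l = next_pos, on vertices rather than positions *)
Definition exchange : mon n :=
  [ffun z => u z + (z == pi (Ordinal k_lt)) - (z == pi (Ordinal next_pos_lt))].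

Lemma expo_exchange i : expo exchange i + (i == next_pos) = expo u i + (i == k).
Proof.
have [kl ul _] := next_posP.
rewrite /expo; case: insubP => [a _ ai|]; last first.
  rewrite -leqNgt => ni; rewrite (gtn_eqF (leq_trans k_lt ni)).
  by rewrite (gtn_eqF (leq_trans next_pos_lt ni)).
subst i; rewrite ffunE !(inj_eq pi_inj).
case: (a =P Ordinal next_pos_lt) => [->|/eqP neq] /=.
  rewrite -val_eqE /= (gtn_eqF kl) eqxx.
  by move: ul; rewrite -[next_pos]/(nat_of_ord (Ordinal next_pos_lt)) expo_ord /=; lia.
by rewrite -!val_eqE /= in neq *; rewrite (negbTE neq) subn0 addn0.
Qed.

Lemma run_sum_exchange x y : run_sum (expo exchange) x y + (x <= next_pos <= y)
  = run_sum (expo u) x y + (x <= k <= y).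
Proof.
by rewrite -!run_sum_indicator -!run_sumD; apply: eq_bigr => i _; apply: expo_exchange.
Qed.

Lemma run_sum_exchange_below x y : x <= k <= y -> y < next_pos ->
  run_sum (expo exchange) x y <= run_sum (expo v) x y.
Proof.
have [kl _ zero] := next_posP; case/andP=> xk ky yl.
rewrite (run_sum_split _ (c := k)) ?xk ?ky //.
have -> : run_sum (expo exchange) k.+1 y = 0.
  apply: big1_seq => i; rewrite mem_index_iota => /andP[_ /andP[ki iy]].
  have il : i < next_pos by rewrite ltnS in iy; apply: leq_ltn_trans iy yl.
  by have := expo_exchange i; rewrite zero ?ki ?il // (ltn_eqF il) (gtn_eqF ki) /=; lia.
have := run_sum_exchange x k; rewrite xk leqnn (ltn_geF kl) andbF /= addn0 => ->.
have : run_sum (expo u) x k < run_sum (expo v) x k.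
  rewrite !run_sum_recr // (eq_big_nat _ _ (F2 := expo v)) ?ltn_add2l //.
  by move=> i /andP[_]; apply: eq_below.
have := run_sum_split (expo v) (c := k) (introT andP (conj xk ky)); lia.
Qed.

Lemma exchange_admissible : admissible m exchange.
Proof.
have [kl _ _] := next_posP; split.
  have : psum (fun i => expo exchange i + (i == next_pos)) n =
         psum (fun i => expo u i + (i == k)) n.
    by apply: eq_bigr => i _; apply: expo_exchange.
  rewrite !psumD !psum_indicator next_pos_lt k_lt !psum_expo //.
  by rewrite u_adm.1 => /addIn.
move=> x y xy; have := run_sum_exchange x y; have := u_adm.2 x y xy.
case: (boolP (x <= k <= y)) => [xky|]; last lia.
case: (boolP (x <= next_pos <= y)) => [|xly]; first lia.
have := v_adm.2 x y xy; have := @run_sum_exchange_below x y xky; lia.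
Qed.

Lemma lex_lt_exchange : lex_lt n (expo u) (expo exchange).
Proof.
have [kl _ _] := next_posP; apply/lex_ltP; exists k => //; split.
  by move=> i ik; have := expo_exchange i; rewrite !ltn_eqF //; lia.
by have := expo_exchange k; rewrite eqxx ltn_eqF //; lia.
Qed.

Lemma exchange_dvd : mon_dvd exchange (mon_mul (var (pi (Ordinal k_lt))) u).
Proof. by apply/forallP => z; rewrite !ffunE; lia. Qed.

End Exchange.

Lemma exchange_property m u v : admissible m u -> admissible m v ->
  lex_lt n (expo u) (expo v) ->
  exists z w, [/\ u z < v z, admissible m w, lex_lt n (expo u) (expo w)
                & mon_dvd w (mon_mul (var z) u)].
Proof.
move=> u_adm v_adm /lex_ltP[k k_lt [eq_below lt_at]].
exists (pi (Ordinal k_lt)), (exchange u_adm v_adm k_lt eq_below lt_at); split.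
- by rewrite -!expo_ord.
- exact: exchange_admissible.
- exact: lex_lt_exchange.
- exact: exchange_dvd.
Qed.

Definition lex_ge (u v : mon n) : bool := (u == v) || lex_lt n (expo v) (expo u).

Lemma lex_ge_refl : reflexive lex_ge.
Proof. by move=> u; rewrite /lex_ge eqxx. Qed.

Lemma lex_ge_trans : transitive lex_ge.
Proof.
move=> v u w; rewrite /lex_ge => /orP[/eqP-> //|vu] /orP[/eqP<-|wv].
  by rewrite vu orbT.
by rewrite (@lex_lt_trans n (expo v) _ _ wv vu) orbT.
Qed.

Lemma lex_ge_total : total lex_ge.
Proof.
move=> u v; case: (eqVneq u v) => [->|neq]; first by rewrite lex_ge_refl.
have : [exists i : 'I_n, expo u i != expo v i].
  apply: contraR neq => /existsPn same; apply/eqP/expo_inj => i.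
  case: (ltnP i n) => [i_n|ni]; last by rewrite !expo_ge.
  exact/eqP/negbNE/(same (Ordinal i_n)).
case/existsP=> i ne; case/orP: (lex_lt_total (ex_intro2 _ _ (val i) (ltn_ord i) ne)).
  by move=> uv; rewrite /lex_ge uv !orbT.
by move=> vu; rewrite /lex_ge vu !orbT.
Qed.

Lemma lex_ge_lt u w : lex_lt n (expo u) (expo w) -> ~~ lex_ge u w.
Proof.
move=> uw; rewrite /lex_ge negb_or; apply/andP; split.
  by apply: contraTneq uw => ->; rewrite lex_lt_irr.
by apply/negP => wu; have := @lex_lt_trans n (expo w) _ _ uw wu; rewrite lex_lt_irr.
Qed.

Theorem pow_gens_linear_quotients m : linear_quotients (pow_gens (It_gens e t) m).
Proof.
set G := pow_gens (It_gens e t) m.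
have memG : min_gens G =i G.
  by apply: (mem_min_gens_equideg (d := t * m)) => g /pow_gens_admissible[].
pose L := sort lex_ge (min_gens G).
have L_sorted : sorted lex_ge L := sort_sorted lex_ge_total _.
have L_uniq : uniq L by rewrite sort_uniq undup_uniq.
have memL g : (g \in L) = (g \in G) by rewrite mem_sort memG.
exists L; split; first by apply/permPl; exact: perm_sort.
move=> i /andP[_ iL]; pose u := nth (mon_one n) L i.
have u_adm : admissible m u by apply: pow_gens_admissible; rewrite -memL mem_nth.
apply: colon_generated_by_vars => g gT.
have g_adm : admissible m g by apply: pow_gens_admissible; rewrite -memL (mem_take gT).
have ug : lex_lt n (expo u) (expo g).
  have := sorted_take_nth (mon_one n) lex_ge_trans lex_ge_refl L_sorted gT iL.
  rewrite /lex_ge => /orP[/eqP gu|//]; move: gT; rewrite gu.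
  by rewrite (negbTE (nth_notin_take _ L_uniq iL)).
have [z [w [uz w_adm uw wdvd]]] := exchange_property u_adm g_adm ug.
exists z => //; apply/hasP; exists w => //.
apply: (mem_take_sorted lex_ge_trans lex_ge_refl L_sorted _ (lex_ge_lt uw)).
by rewrite memL admissible_pow_gens.
Qed.

End IntervalOrder.

Section ProperInterval.

Variables (n : nat) (e : rel 'I_n) (a b : 'I_n -> R).
Hypothesis a_le_b : forall i, Rle (a i) (b i).
Hypothesis no_nesting : forall i j,
  ~ (Rle (a i) (a j) /\ Rle (b j) (b i) /\ (a i <> a j \/ b i <> b j)).
Hypothesis e_meet :
  forall i j, i <> j -> (e i j <-> (Rle (a i) (b j) /\ Rle (a j) (b i))).

Definition left_le (i j : 'I_n) : bool := if Rle_dec (a i) (a j) then true else false.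

Lemma left_leP i j : reflect (Rle (a i) (a j)) (left_le i j).
Proof. by rewrite /left_le; case: Rle_dec => h; constructor. Qed.

Lemma left_le_refl : reflexive left_le.
Proof. by move=> i; apply/left_leP; lra. Qed.

Lemma left_le_trans : transitive left_le.
Proof. by move=> j i k /left_leP ij /left_leP jk; apply/left_leP; lra. Qed.

Lemma left_le_total : total left_le.
Proof.
move=> i j; apply/orP.
by case: (Rle_or_lt (a i) (a j)) => h; [left|right]; apply/left_leP; lra.
Qed.

Definition by_left : seq 'I_n := sort left_le (enum 'I_n).

Definition vertex_at (j : 'I_n) : 'I_n := nth j by_left j.

Lemma size_by_left : size by_left = n.
Proof. by rewrite size_sort size_enum_ord. Qed.

Lemma vertex_at_inj : injective vertex_at.
Proof.
move=> i j; rewrite /vertex_at (set_nth_default i j) ?size_by_left // => /eqP.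
rewrite nth_uniq ?size_by_left // ?sort_uniq ?enum_uniq // => /eqP; exact: val_inj.
Qed.

Lemma vertex_at_mono (i j : 'I_n) : i <= j -> Rle (a (vertex_at i)) (a (vertex_at j)).
Proof.
move=> ij; apply/left_leP; rewrite /vertex_at (set_nth_default i j) ?size_by_left //.
apply: (sorted_leq_nth left_le_trans left_le_refl); rewrite ?inE ?size_by_left //.
exact: sort_sorted left_le_total _.
Qed.

Lemma right_mono x y : Rle (a x) (a y) -> Rle (b x) (b y).
Proof.
move=> axy; case: (Rle_or_lt (b x) (b y)) => // byx; exfalso.
by apply: (no_nesting (i := x) (j := y)); do !split; [lra | lra | right; lra].
Qed.

Lemma e_symmetric : symmetric e.
Proof.
move=> i j; case: (eqVneq i j) => [-> //|/eqP neq].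
have neq' : j <> i by move=> ji; apply: neq.
apply/idP/idP => [/(e_meet neq) ij|/(e_meet neq') ji].
  by apply/(e_meet neq'); lra.
by apply/(e_meet neq); lra.
Qed.

Lemma vertex_at_umbrella (i j k : 'I_n) : i < j < k -> e (vertex_at i) (vertex_at k) ->
  e (vertex_at i) (vertex_at j) && e (vertex_at j) (vertex_at k).
Proof.
case/andP=> ij jk ik.
have ne (x y : 'I_n) : x < y -> vertex_at x <> vertex_at y.
  by move=> xy /vertex_at_inj eq_xy; rewrite eq_xy ltnn in xy.
have aij := vertex_at_mono (ltnW ij); have ajk := vertex_at_mono (ltnW jk).
have bij := right_mono aij; have bjk := right_mono ajk.
have [ab_ik ab_ki] := proj1 (e_meet (ne _ _ (ltn_trans ij jk))) ik.
have ab_j := a_le_b (vertex_at j).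
by apply/andP; split; [apply/(e_meet (ne _ _ ij)) | apply/(e_meet (ne _ _ jk))]; lra.
Qed.

End ProperInterval.

Theorem theorem2p7 (n : nat) (e : rel 'I_n) (t : nat) :
  proper_interval_graph e -> (2 <= t)%N ->
  forall m : nat, (0 < m)%N -> linear_quotients (pow_gens (It_gens e t) m).
Proof.
move=> [e_loopless [a [b [a_le_b [no_nesting e_meet]]]]] _ m _.
have e_irr : irreflexive e by move=> i; apply/negbTE.
exact: (pow_gens_linear_quotients (vertex_at_inj (a := a)) e_irr (e_symmetric e_meet)
          (vertex_at_umbrella a_le_b no_nesting e_meet)).
Qed.
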